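(* Let $\hat A\in\mathbb{R}^{n\times n}$, $\hat B\in\mathbb{R}^{n\times m}$, and $\rho>0$. Let $Q\in\mathbb{R}^{n\times n}$, $R\in\mathbb{R}^{m\times m}$ with $Q\succ0$, $R\succ0$, factored as $\begin{bmatrix}Q&0\\0&R\end{bmatrix}=\begin{bmatrix}C_c^\top\\ (D_c^u)^\top\end{bmatrix}\begin{bmatrix}C_c & D_c^u\end{bmatrix}$ with $C_c\in\mathbb{R}^{n_c\times n}$, $D_c^u\in\mathbb{R}^{n_c\times m}$, $n_c=n+m$. Define $C_z=\begin{bmatrix}\rho I_n\\ 0_{m\times n}\end{bmatrix}$ and $D_z^u=\begin{bmatrix}0_{n\times m}\\ \rho I_m\end{bmatrix}$. Suppose there exist a symmetric $X\in\mathbb{R}^{n\times n}$ with $X\succ0$, a matrix $M\in\mathbb{R}^{m\times n}$, and a scalar $\beta>0$ such that $$\begin{bmatrix} -\beta I_{n+m} & 0 & 0 & C_zX-D_z^uM & 0\\ * & -I_{n_c} & 0 & C_cX-D_c^uM & 0\\ * & * & -X & \hat AX-\hat BM & \beta I_n\\ * & * & * & -X & 0\\ * & * & * & * & -\beta I_n \end{bmatrix}\preceq 0,$$ where $*$ denotes the blocks determined by symmetry. Set $K=MX^{-1}$ and $P=X^{-1}$. Then for every $\Delta A\in\mathbb{R}^{n\times n}$, $\Delta B\in\mathbb{R}^{n\times m}$ with $\|[\Delta A,\ \Delta B]\|\le\rho$, $$\big(\hat A+\Delta A-(\hat B+\Delta B)K\big)^\top P\big(\hat A+\Delta A-(\hat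 B+\Delta B)K\big)-P+Q+K^\top RK\preceq 0,$$ and consequently, for every initial state $x_0\in\mathbb{R}^n$, the trajectory of $x_{t+1}=(\hat A+\Delta A)x_t+(\hat B+\Delta B)u_t$ with $u_t=-Kx_t$ satisfies $$J(x_0)=\lim_{N\to\infty}\sum_{t=0}^{N}\left(x_t^\top Qx_t+u_t^\top Ru_t\right)\le x_0^\top Px_0 .$$ That is, $u_t=-Kx_t$ is a stabilizing guaranteed cost controller for the uncertain system with guaranteed cost $x_0^\top P x_0$.
   Context: $\|\cdot\|$ on matrices denotes the Frobenius norm. The uncertain system $x_{t+1}=(\hat A+\Delta A)x_t+(\hat B+\Delta B)u_t$ arises from an identified model $(\hat A,\hat B)$ of an unknown linear system whose identification error $[\Delta A,\Delta B]$ is only known to satisfy $\|[\Delta A,\Delta B]\|\le\rho$. $I_k$ denotes the $k\times k$ identity and $\preceq 0$ means negative semidefinite. *)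

From HB Require Import structures.
From mathcomp Require Import all_boot all_order all_algebra.
From mathcomp Require Import all_classical all_reals all_analysis.
Set Implicit Arguments. Unset Strict Implicit. Unset Printing Implicit Defensive.
Import Order.TTheory GRing.Theory Num.Theory.
Local Open Scope ring_scope.

Section Defs.
Variable R : realType.

Definition qform k (A : 'M[R]_k) (v : 'cV[R]_k) : R := (v^T *m A *m v) 0 0.

Definition sym_mx k (A : 'M[R]_k) : Prop := A^T = A.

Definition posdef k (A : 'M[R]_k) : Prop :=
  sym_mx A /\ forall v : 'cV[R]_k, v != 0 -> 0 < qform A v.

Definition negsemidef k (A : 'M[R]_k) : Prop :=
  sym_mx A /\ forall v : 'cV[R]_k, qform A v <= 0.

Definition frob p q (A : 'M[R]_(p, q)) : R :=
  Num.sqrt (\sum_(i < p) \sum_(j < q) A i j ^+ 2).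

Fixpoint traj n m (A : 'M[R]_n) (B : 'M[R]_(n, m)) (K : 'M[R]_(m, n))
    (x0 : 'cV[R]_n) (t : nat) : 'cV[R]_n :=
  match t with
  | 0 => x0
  | t'.+1 => let xt := traj A B K x0 t' in A *m xt + B *m (- (K *m xt))
  end.

Definition cost_partial n m (A : 'M[R]_n) (B : 'M[R]_(n, m)) (K : 'M[R]_(m, n))
    (Q : 'M[R]_n) (Rw : 'M[R]_m) (x0 : 'cV[R]_n) (N : nat) : R :=
  \sum_(t < N.+1)
     (qform Q (traj A B K x0 t) + qform Rw (- (K *m traj A B K x0 t))).

(* The 5x5 block LMI matrix of the statement (blocks below the diagonal
   determined by symmetry).  Block sizes: n+m, n+m (= n_c), n, n, n. *)
Definition lmi_matrix n m (Ah : 'M[R]_n) (Bh : 'M[R]_(n, m))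
    (Cz Cc : 'M[R]_(n + m, n)) (Dz Dc : 'M[R]_(n + m, m))
    (X : 'M[R]_n) (M : 'M[R]_(m, n)) (beta : R)
  : 'M[R]_((n + m) + ((n + m) + (n + (n + n)))) :=
  let E1 := Cz *m X - Dz *m M in
  let E2 := Cc *m X - Dc *m M in
  let E3 := Ah *m X - Bh *m M in
  col_mx
    (row_mx (- beta%:M) (row_mx 0 (row_mx 0 (row_mx E1 0))))
  (col_mx
    (row_mx 0 (row_mx (- 1%:M) (row_mx 0 (row_mx E2 0))))
  (col_mx
    (row_mx 0 (row_mx 0 (row_mx (- X) (row_mx E3 (beta%:M)))))
  (col_mx
    (row_mx E1^T (row_mx E2^T (row_mx E3^T (row_mx (- X) 0))))
    (row_mx 0 (row_mx 0 (row_mx (beta%:M) (row_mx 0 (- beta%:M)))))))).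

End Defs.

From HB Require Import structures.
From mathcomp Require Import all_boot all_order all_algebra.
From mathcomp Require Import all_classical all_reals all_analysis.
From mathcomp Require Import ring lra.
Import Order.TTheory GRing.Theory Num.Theory.
Import numFieldTopology.Exports numFieldNormedType.Exports.
Local Open Scope classical_set_scope.
Local Open Scope ring_scope.

(* Evaluating the LMI at a suitably chosen vector built from
   v, d = X^-1 v and c = X^-1 L v (L the perturbed closed-loop matrix) is the
   Schur-complement step: it leaves, besides the robust Riccati inequality
   v'(L'PL - P + Q + K'RK)v <= 0, only the uncertainty cross term
   2 <c, [dA dB] u>, which Young's inequality together with the Frobenius
   bound rho absorbs into the beta-terms of the LMI.  Along the closed loop,
   V(x) = x'Px then decreases by at least the stage cost, so the partial costs
   are nondecreasing and bounded by V(x0); hence they converge, the stage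
   costs tend to 0, and since Q is positive definite so does the state. *)

Set Implicit Arguments. Unset Strict Implicit. Unset Printing Implicit Defensive.

Section VectorDot.
Variable R : realFieldType.

Definition vdot k (u v : 'cV[R]_k) : R := (u^T *m v) 0 0.

Lemma vdotE k (u v : 'cV[R]_k) : vdot u v = \sum_i u i 0 * v i 0.
Proof. by rewrite /vdot mxE; apply: eq_bigr => i _; rewrite mxE. Qed.

Lemma vdotC k (u v : 'cV[R]_k) : vdot u v = vdot v u.
Proof. by rewrite !vdotE; apply: eq_bigr => i _; rewrite mulrC. Qed.

Lemma vdot0r k (u : 'cV[R]_k) : vdot u 0 = 0.
Proof. by rewrite /vdot mulmx0 mxE. Qed.

Lemma vdotDr k (u v w : 'cV[R]_k) : vdot u (v + w) = vdot u v + vdot u w.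
Proof. by rewrite /vdot mulmxDr mxE. Qed.

Lemma vdotNr k (u v : 'cV[R]_k) : vdot u (- v) = - vdot u v.
Proof. by rewrite /vdot mulmxN mxE. Qed.

Lemma vdotBr k (u v w : 'cV[R]_k) : vdot u (v - w) = vdot u v - vdot u w.
Proof. by rewrite vdotDr vdotNr. Qed.

Lemma vdotZr k (a : R) (u v : 'cV[R]_k) : vdot u (a *: v) = a * vdot u v.
Proof. by rewrite /vdot -scalemxAr mxE. Qed.

Lemma vdotBl k (u v w : 'cV[R]_k) : vdot (v - w) u = vdot v u - vdot w u.
Proof. by rewrite vdotC vdotBr !(vdotC u). Qed.

Lemma vdotZl k (a : R) (u v : 'cV[R]_k) : vdot (a *: v) u = a * vdot v u.
Proof. by rewrite vdotC vdotZr vdotC. Qed.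

Lemma vdot_mulmxr p k (A : 'M[R]_(p, k)) u v : vdot u (A *m v) = vdot (A^T *m u) v.
Proof. by rewrite /vdot trmx_mul trmxK mulmxA. Qed.

Lemma vdot_trmxr p k (A : 'M[R]_(k, p)) u v : vdot u (A^T *m v) = vdot (A *m u) v.
Proof. by rewrite vdot_mulmxr trmxK. Qed.

Lemma vdot_col_mx p k (a c : 'cV[R]_p) (b d : 'cV[R]_k) :
  vdot (col_mx a b) (col_mx c d) = vdot a c + vdot b d.
Proof. by rewrite /vdot tr_col_mx mul_row_col mxE. Qed.

Lemma vdot_ge0 k (u : 'cV[R]_k) : 0 <= vdot u u.
Proof. by rewrite vdotE; apply: sumr_ge0 => i _; rewrite -expr2 sqr_ge0. Qed.

Lemma discriminant_le (A B C : R) :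
  0 <= A -> (forall t, 0 <= t ^+ 2 * A - 2 * t * C + B) -> C ^+ 2 <= A * B.
Proof.
move=> A0 h; have [Apos|] := ltP 0 A.
  have := h (C / A).
  have -> : (C / A) ^+ 2 * A - 2 * (C / A) * C + B = B - C ^+ 2 / A.
    by field; rewrite gt_eqF.
  by rewrite subr_ge0 ler_pdivrMr // mulrC.
move/(conj A0)/andP; rewrite -eq_le => /eqP A00.
have [->|C0] := eqVneq C 0; first by rewrite expr0n -A00 mul0r.
have := h ((B + 1) / (2 * C)).
have -> : ((B + 1) / (2 * C)) ^+ 2 * A - 2 * ((B + 1) / (2 * C)) * C + B = -1.
  by rewrite -A00; field; rewrite C0.
by rewrite ler0N1.
Qed.

Lemma cauchy_schwarz_sum (I : finType) (x y : I -> R) :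
  (\sum_i x i * y i) ^+ 2 <= (\sum_i x i ^+ 2) * (\sum_i y i ^+ 2).
Proof.
apply: discriminant_le => [|t]; first by apply: sumr_ge0 => i _; rewrite sqr_ge0.
rewrite mulr_sumr mulr_sumr -sumrB -big_split /=.
apply: sumr_ge0 => i _.
have -> : t ^+ 2 * x i ^+ 2 - 2 * t * (x i * y i) + y i ^+ 2 = (t * x i - y i) ^+ 2.
  by ring.
exact: sqr_ge0.
Qed.

Lemma mul2_le_add_of_sqr_le_mul (z a b : R) :
  0 <= a -> 0 <= b -> z ^+ 2 <= a * b -> 2 * z <= a + b.
Proof. by move=> a0 b0 h; have := sqr_ge0 (a - b); nra. Qed.

Lemma vdot_mulmx_sqr_le p k (D : 'M[R]_(p, k)) c u :
  vdot c (D *m u) ^+ 2 <= (\sum_i \sum_j D i j ^+ 2) * (vdot c c * vdot u u).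
Proof.
have := cauchy_schwarz_sum (fun ij : 'I_p * 'I_k => D ij.1 ij.2)
                            (fun ij => c ij.1 0 * u ij.2 0).
rewrite -(pair_bigA _ (fun i j => D i j * (c i 0 * u j 0))).
rewrite -(pair_bigA _ (fun i j => D i j ^+ 2)).
rewrite -(pair_bigA _ (fun i j => (c i 0 * u j 0) ^+ 2)) /=.
congr (_ ^+ 2 <= _ * _).
- rewrite vdotE; apply: eq_bigr => i _; rewrite mxE mulr_sumr.
  by apply: eq_bigr => j _; ring.
- rewrite !vdotE mulr_suml; apply: eq_bigr => i _; rewrite mulr_sumr.
  by apply: eq_bigr => j _; ring.
Qed.
End VectorDot.

Section QuadraticForms.
Variable R : realType.

Lemma qformE k (A : 'M[R]_k) v : qform A v = vdot v (A *m v).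
Proof. by rewrite /qform /vdot mulmxA. Qed.

Lemma qformD k (A B : 'M[R]_k) v : qform (A + B) v = qform A v + qform B v.
Proof. by rewrite !qformE mulmxDl vdotDr. Qed.

Lemma qformN k (A : 'M[R]_k) v : qform (- A) v = - qform A v.
Proof. by rewrite !qformE mulNmx vdotNr. Qed.

Lemma qformNv k (A : 'M[R]_k) v : qform A (- v) = qform A v.
Proof. by rewrite !qformE mulmxN vdotNr vdotC vdotNr vdotC opprK. Qed.

Lemma qform_congr p k (A : 'M[R]_p) (W : 'M[R]_(p, k)) v :
  qform (W^T *m A *m W) v = qform A (W *m v).
Proof. by rewrite /qform trmx_mul !mulmxA. Qed.

Lemma qform_block_diag p k (A : 'M[R]_p) (B : 'M[R]_k) u w :
  qform (block_mx A 0 0 B) (col_mx u w) = qform A u + qform B w.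
Proof.
rewrite !qformE mul_block_col !mul0mx addr0 add0r vdot_col_mx.
by rewrite -!qformE.
Qed.

Lemma sym_mx_congr p k (A : 'M[R]_p) (W : 'M[R]_(p, k)) :
  sym_mx A -> sym_mx (W^T *m A *m W).
Proof. by move=> hA; rewrite /sym_mx !trmx_mul trmxK hA mulmxA. Qed.

Lemma posdef_qform_ge0 k (A : 'M[R]_k) v : posdef A -> 0 <= qform A v.
Proof.
move=> [_ hA]; have [->|v0] := eqVneq v 0; last exact/ltW/hA.
by rewrite qformE mulmx0 vdot0r.
Qed.

Lemma posdef_unitmx k (A : 'M[R]_k) : posdef A -> A \in unitmx.
Proof.
move=> [_ hA]; rewrite unitmxE unitfE; apply/negP => /det0P [u u0 uA].
have := hA u^T; rewrite trmx_eq0 u0 => /(_ isT).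
by rewrite /qform trmxK uA mul0mx mxE ltxx.
Qed.

Lemma sum_sqr_le_of_frob_le p k (A : 'M[R]_(p, k)) rho :
  frob A <= rho -> \sum_i \sum_j A i j ^+ 2 <= rho ^+ 2.
Proof.
rewrite /frob; set S := \sum_i _ => hS.
have S0 : 0 <= S by do 2!apply: sumr_ge0 => ? _; exact: sqr_ge0.
by rewrite -(sqr_sqrtr S0); have := sqrtr_ge0 S; nra.
Qed.

Lemma vdot_mulmx_young p k (D : 'M[R]_(p, k)) c u rho beta :
  0 < beta -> frob D <= rho ->
  2 * vdot c (D *m u) <= beta * vdot c c + rho ^+ 2 * vdot u u / beta.
Proof.
move=> beta0 hD; apply: mul2_le_add_of_sqr_le_mul.
- exact: mulr_ge0 (ltW beta0) (vdot_ge0 c).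
- exact: divr_ge0 (mulr_ge0 (sqr_ge0 rho) (vdot_ge0 u)) (ltW beta0).
have -> : beta * vdot c c * (rho ^+ 2 * vdot u u / beta)
          = rho ^+ 2 * (vdot c c * vdot u u) by field; rewrite gt_eqF.
apply: le_trans (vdot_mulmx_sqr_le D c u) _.
by rewrite ler_wpM2r ?mulr_ge0 ?vdot_ge0 // sum_sqr_le_of_frob_le.
Qed.

Lemma posdef_invmx k (A : 'M[R]_k) : posdef A -> posdef (invmx A).
Proof.
move=> hA; have Au := posdef_unitmx hA; have sA : A^T = A := hA.1.
have sP : sym_mx (invmx A) by rewrite /sym_mx trmx_inv sA.
split=> // v v0.
have -> : invmx A = (invmx A)^T *m A *m invmx A.
  by rewrite sP -mulmxA mulmxV // mulmx1.
rewrite qform_congr.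
apply: hA.2; apply: contra v0 => /eqP Pv0.
by rewrite -(mulKVmx Au v) Pv0 mulmx0.
Qed.

End QuadraticForms.

Section RobustRiccati.
Variable R : realType.

Lemma qform_lmi_matrix n m (Ah : 'M[R]_n) (Bh : 'M[R]_(n, m))
    (Cz Cc : 'M[R]_(n + m, n)) (Dz Dc : 'M[R]_(n + m, m))
    (X : 'M[R]_n) (M : 'M[R]_(m, n)) (beta : R) a b c d e :
  qform (lmi_matrix Ah Bh Cz Cc Dz Dc X M beta)
    (col_mx a (col_mx b (col_mx c (col_mx d e)))) =
  - beta * vdot a a + 2 * vdot a ((Cz *m X - Dz *m M) *m d)
  - vdot b b + 2 * vdot b ((Cc *m X - Dc *m M) *m d)
  - vdot c (X *m c) + 2 * vdot c ((Ah *m X - Bh *m M) *m d) + 2 * beta * vdot c e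
  - vdot d (X *m d) - beta * vdot e e.
Proof.
rewrite qformE /lmi_matrix !mul_col_mx !mul_row_col !mul0mx !addr0 !add0r.
rewrite !vdot_col_mx !vdotDr !mulNmx !vdotNr !mul_scalar_mx !vdotZr.
rewrite !vdot_trmxr !(vdotC (_ *m d)) (vdotC e c); ring.
Qed.

Lemma robust_riccati_qform n m (Ah : 'M[R]_n) (Bh : 'M[R]_(n, m)) (rho : R)
    (Q : 'M[R]_n) (Rw : 'M[R]_m) (Cc : 'M[R]_(n + m, n)) (Dc : 'M[R]_(n + m, m))
    (X : 'M[R]_n) (M : 'M[R]_(m, n)) (beta : R)
    (dA : 'M[R]_n) (dB : 'M[R]_(n, m)) :
  0 < beta -> X \in unitmx ->
  block_mx Q 0 0 Rw = col_mx Cc^T Dc^T *m row_mx Cc Dc ->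
  negsemidef (lmi_matrix Ah Bh
                (col_mx (rho%:M) 0) Cc (col_mx 0 (rho%:M)) Dc X M beta) ->
  frob (row_mx dA dB) <= rho ->
  let K := M *m invmx X in
  let P := invmx X in
  forall v, qform P ((Ah + dA - (Bh + dB) *m K) *m v) - qform P v
            + qform Q v + qform Rw (- (K *m v)) <= 0.
Proof.
move=> beta0 Xu hfac [_ hlmi] hfrob K P v.
set L := Ah + dA - (Bh + dB) *m K.
set u := col_mx v (- (K *m v)); set D := row_mx dA dB.
set d := P *m v; set c := P *m (L *m v).
have XP : X *m P = 1%:M by exact: mulmxV.
have Xd : X *m d = v by rewrite mulmxA XP mul1mx.
have Xc : X *m c = L *m v by rewrite mulmxA XP mul1mx.
have gain C E : (C *m X - E *m M) *m d = row_mx C E *m u.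
  by rewrite mul_row_col mulmxBl -!mulmxA Xd mulmxN.
have nominal_u : row_mx Ah Bh *m u = L *m v - D *m u.
  rewrite !mul_row_col /L !mulmxBl !mulmxDl !mulmxN -!mulmxA.
  by apply/colP => i; rewrite !mxE; ring.
have Cz_u : row_mx (col_mx rho%:M 0) (col_mx 0 rho%:M) *m u = rho *: u.
  rewrite mul_row_col !mul_col_mx !mul_scalar_mx !mul0mx add_col_mx.
  by rewrite addr0 add0r -scale_col_mx.
have stage_cost : vdot (row_mx Cc Dc *m u) (row_mx Cc Dc *m u)
          = qform Q v + qform Rw (- (K *m v)).
  by rewrite -qform_block_diag hfac -tr_row_mx qformE -mulmxA vdot_trmxr.
(* With this vector every off-diagonal LMI term pairs with a diagonal one,
   leaving the Riccati terms and the cross term 2 <c, D u>. *)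
have := hlmi (col_mx (beta^-1 *: (rho *: u))
               (col_mx (row_mx Cc Dc *m u) (col_mx c (col_mx d c)))).
rewrite qform_lmi_matrix !gain Cz_u stage_cost Xd Xc nominal_u !vdotZl !vdotZr vdotBr.
rewrite (vdotC c) (vdotC d) -!qformE.
have -> : - beta * (beta^-1 * (rho * (beta^-1 * (rho * vdot u u))))
          + 2 * (beta^-1 * (rho * (rho * vdot u u))) = rho ^+ 2 * vdot u u / beta.
  by field; rewrite gt_eqF.
have := vdot_mulmx_young c u beta0 hfrob; lra.
Qed.

Lemma negsemidef_riccati n m (L P Q : 'M[R]_n) (K : 'M[R]_(m, n)) (Rw : 'M[R]_m) :
  sym_mx P -> sym_mx Q -> sym_mx Rw ->
  (forall v, qform P (L *m v) - qform P v + qform Q v + qform Rw (- (K *m v)) <= 0) ->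
  negsemidef (L^T *m P *m L - P + Q + K^T *m Rw *m K).
Proof.
move=> sP sQ sR hric; split=> [|v].
  by rewrite /sym_mx !raddfD /= raddfN /= !sym_mx_congr // sP sQ.
by move: (hric v); rewrite qformNv !qformD qformN !qform_congr.
Qed.

End RobustRiccati.

Section Stability.
Variable R : realType.

Lemma qform_cauchy_schwarz k (Q : 'M[R]_k) x y : posdef Q ->
  vdot x (Q *m y) ^+ 2 <= qform Q x * qform Q y.
Proof.
move=> hQ; apply: discriminant_le => [|t]; first exact: posdef_qform_ge0.
have := posdef_qform_ge0 (y - t *: x) hQ.
have sym : vdot y (Q *m x) = vdot x (Q *m y).
  by rewrite vdot_mulmxr hQ.1 vdotC.
rewrite !qformE mulmxBr vdotBl !vdotBr -!scalemxAr !vdotZl !vdotZr sym.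
by congr (0 <= _); ring.
Qed.

Lemma entry_sqr_le_qform k (Q : 'M[R]_k) : posdef Q ->
  exists gam : R, forall (x : 'cV[R]_k) i, x i 0 ^+ 2 <= gam * qform Q x.
Proof.
move=> hQ; pose y i := invmx Q *m delta_mx i (0 : 'I_1).
have coord x i : vdot x (Q *m y i) = x i 0.
  by rewrite mulmxA mulmxV ?posdef_unitmx // mul1mx /vdot -colE !mxE.
exists (\sum_i qform Q (y i)) => x i.
rewrite -coord (le_trans (qform_cauchy_schwarz x (y i) hQ)) // mulrC.
rewrite ler_wpM2r ?posdef_qform_ge0 // (bigD1 i) //= lerDl.
by apply: sumr_ge0 => j _; exact: posdef_qform_ge0.
Qed.

Lemma cvg0_of_qform_cvg0 k (Q : 'M[R]_k) (x : nat -> 'cV[R]_k) : posdef Q ->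
  (fun t => qform Q (x t)) @ \oo --> 0 -> x @ \oo --> (0 : 'cV[R]_k).
Proof.
move=> hQ hq; have [gam hgam] := entry_sqr_le_qform hQ.
apply/cvgrPdist_le => e e0.
have d0 : 0 < e ^+ 2 / (`|gam| + 1) by rewrite divr_gt0 ?exprn_gt0 // ltr_pwDr.
move/cvgrPdist_le: hq => /(_ _ d0); apply: filterS => t.
rewrite sub0r normrN ger0_norm ?posdef_qform_ge0 // ler_pdivlMr ?ltr_pwDr // => ht.
rewrite /Num.Def.normr /= mx_normrE (bigmax_le _ (ltW e0)) //= => -[i j] _.
rewrite !mxE (ord1 j) sub0r normrN.
have : x t i 0 ^+ 2 <= e ^+ 2.
  apply: le_trans (hgam (x t) i) (le_trans _ ht).
  rewrite mulrC ler_wpM2l ?posdef_qform_ge0 //.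
  by rewrite (le_trans (ler_norm gam)) // lerDl.
by rewrite ler_norml => hx; apply/andP; split; nra.
Qed.

End Stability.

Section GuaranteedCost.
Variable R : realType.

Lemma partial_sums_lyapunov (w V : R ^nat) :
  (forall t, 0 <= w t) -> (forall t, 0 <= V t) ->
  (forall t, w t + V t.+1 <= V t) ->
  cvgn (fun N => \sum_(t < N.+1) w t) /\
  limn (fun N => \sum_(t < N.+1) w t) <= V 0%N.
Proof.
move=> w0 V0 hdec.
have bound N : \sum_(t < N.+1) w t <= V 0%N.
  suff : \sum_(t < N.+1) w t + V N.+1 <= V 0%N by have := V0 N.+1; lra.
  elim: N => [|N IH]; first by rewrite big_ord1.
  by rewrite big_ord_recr /=; have := hdec N.+1; lra.
have cv : cvgn (fun N => \sum_(t < N.+1) w t).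
  apply: nondecreasing_is_cvgn; last by exists (V 0%N) => _ [N _ <-].
  by apply/nondecreasing_seqP => N; rewrite [leRHS]big_ord_recr /= lerDl.
by split=> //; apply: limr_le => //; apply: nearW.
Qed.

Lemma cvg0_of_cvgn_partial_sums (w : R ^nat) :
  cvgn (fun N => \sum_(t < N.+1) w t) -> w @ \oo --> 0.
Proof.
move=> cv; apply: cvg_series_cvg_0; apply/cvg_ex.
exists (limn (fun N => \sum_(t < N.+1) w t)); rewrite -cvg_shiftS seriesEord.
exact: cv.
Qed.


Lemma trajS n m (A : 'M[R]_n) (B : 'M[R]_(n, m)) (K : 'M[R]_(m, n)) x0 t :
  traj A B K x0 t.+1 = (A - B *m K) *m traj A B K x0 t.
Proof. by rewrite /= mulmxN mulmxBl mulmxA. Qed.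

Lemma traj_guaranteed_cost n m (A : 'M[R]_n) (B : 'M[R]_(n, m))
    (K : 'M[R]_(m, n)) (Q P : 'M[R]_n) (Rw : 'M[R]_m) (x0 : 'cV[R]_n) :
  posdef Q -> posdef Rw -> (forall v, 0 <= qform P v) ->
  (forall v, qform P ((A - B *m K) *m v) - qform P v
             + qform Q v + qform Rw (- (K *m v)) <= 0) ->
  traj A B K x0 @ \oo --> (0 : 'cV[R]_n)
  /\ cvgn (cost_partial A B K Q Rw x0)
  /\ limn (cost_partial A B K Q Rw x0) <= qform P x0.
Proof.
move=> hQ hRw P0 hric; set x := traj A B K x0.
pose w t := qform Q (x t) + qform Rw (- (K *m x t)).
have w0 t : 0 <= w t by rewrite addr_ge0 ?posdef_qform_ge0.
have [cv bound] : cvgn (cost_partial A B K Q Rw x0)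
                  /\ limn (cost_partial A B K Q Rw x0) <= qform P (x 0%N).
  apply: (partial_sums_lyapunov (V := fun t => qform P (x t)) w0) => // t.
  by rewrite /x trajS /w; have := hric (x t); lra.
split=> //; apply: (cvg0_of_qform_cvg0 hQ).
apply: (squeeze_cvgr (h := w) _ (cvg_cst 0) (cvg0_of_cvgn_partial_sums cv)).
by apply: nearW => t /=; rewrite posdef_qform_ge0 //= lerDl posdef_qform_ge0.
Qed.

End GuaranteedCost.

Unset Implicit Arguments.

Theorem theorem2 (R : realType) (n m : nat)
  (Ah : 'M[R]_n) (Bh : 'M[R]_(n, m)) (rho : R)
  (Q : 'M[R]_n) (Rw : 'M[R]_m)
  (Cc : 'M[R]_(n + m, n)) (Dc : 'M[R]_(n + m, m))
  (X : 'M[R]_n) (M : 'M[R]_(m, n)) (beta : R) :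
  0 < rho ->
  posdef Q -> posdef Rw ->
  block_mx Q 0 0 Rw = col_mx Cc^T Dc^T *m row_mx Cc Dc ->
  sym_mx X -> posdef X -> 0 < beta ->
  negsemidef (lmi_matrix Ah Bh
                (col_mx (rho%:M) 0) Cc (col_mx 0 (rho%:M)) Dc X M beta) ->
  let K := M *m invmx X in
  let P := invmx X in
  forall (dA : 'M[R]_n) (dB : 'M[R]_(n, m)),
    frob (row_mx dA dB) <= rho ->
    negsemidef ((Ah + dA - (Bh + dB) *m K)^T *m P *m (Ah + dA - (Bh + dB) *m K)
                - P + Q + K^T *m Rw *m K)
    /\ forall x0 : 'cV[R]_n,
         traj (Ah + dA) (Bh + dB) K x0 @ \oo --> (0 : 'cV[R]_n)
      /\ cvgn (cost_partial (Ah + dA) (Bh + dB) K Q Rw x0)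
      /\ limn (cost_partial (Ah + dA) (Bh + dB) K Q Rw x0) <= qform P x0.
Proof.
move=> _ hQ hRw hfac _ hX beta0 hlmi K P dA dB hfrob.
have hric := robust_riccati_qform beta0 (posdef_unitmx hX) hfac hlmi hfrob.
have hP : posdef P := posdef_invmx hX.
split; first exact: negsemidef_riccati hP.1 hQ.1 hRw.1 hric.
move=> x0; apply: traj_guaranteed_cost hQ hRw _ hric => v.
exact: posdef_qform_ge0.
Qed.
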